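(* Let $R>0$ and $\gamma>1$. For admissible states (density $\rho>0$, temperature $T>0$, velocity $V=(V_1,V_2,V_3)$), let $u=(\rho,\rho V_1,\rho V_2,\rho V_3,\rho E)^T$ with $E=\frac{R}{\gamma-1}T+\frac12|V|^2$. For two admissible states $L,R$ and auxiliary variables $Z=(Z_1,\dots,Z_5)$ depending on the state, write $$\overline{Z_k}=\tfrac12(Z_{k,L}+Z_{k,R}),\qquad \overline{Z_k}_{\log}=\frac{Z_{k,R}-Z_{k,L}}{\log Z_{k,R}-\log Z_{k,L}}$$ (with $\overline{Z_k}_{\log}=Z_{k,L}$ when $Z_{k,L}=Z_{k,R}$). Also write $\overline{Z_k^2}=\frac12(Z_{k,L}^2+Z_{k,R}^2)$. Define two two-point functions as follows. (i) With $Z=\bigl(1/\sqrt T,\;V_1/\sqrt T,\;V_2/\sqrt T,\;V_3/\sqrt T,\;\rho\sqrt T\bigr)$: $$U_1^{sc}(u_L,u_R)=\begin{pmatrix}\overline{Z_5}_{\log}\overline{Z_1}\\ \overline{Z_5}_{\log}\overline{Z_2}\\ \overline{Z_5}_{\log}\overline{Z_3}\\ \overline{Z_5}_{\log}\overline{Z_4}\\ \tfrac12\overline{Z_5}_{\log}\Bigl(\frac{R(\gamma+1)}{(\gamma-1)\overline{Z_1}_{\log}}+\frac{1}{\overline{Z_1}}\bigl(\overline{Z_2}^2+\overline{Z_3}^2+\overline{Z_4}^2-R\,\overline{Z_5}/\overline{Z_5}_{\log}\bigr)\Bigr)\end{pmatrix}.$$ (ii) With $Z=(\rho,V_1,V_2,V_3,1/T)$: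 $$U_2^{sc}(u_L,u_R)=\begin{pmatrix}\overline{Z_1}_{\log}\\ \overline{Z_1}_{\log}\overline{Z_2}\\ \overline{Z_1}_{\log}\overline{Z_3}\\ \overline{Z_1}_{\log}\overline{Z_4}\\ \overline{Z_1}_{\log}\Bigl(\frac{R}{(\gamma-1)\overline{Z_5}_{\log}}+\overline{Z_2}^2+\overline{Z_3}^2+\overline{Z_4}^2-\tfrac12\bigl(\overline{Z_2^2}+\overline{Z_3^2}+\overline{Z_4^2}\bigr)\Bigr)\end{pmatrix}.$$ Then each of $U^{sc}=U_1^{sc}$ and $U^{sc}=U_2^{sc}$ has the following properties: - it is symmetric: $U^{sc}(u_L,u_R)=U^{sc}(u_R,u_L)$; - it is consistent: $U^{sc}(u,u)=u$; - it satisfies the shuffle condition $$\bigl(w(u_L)-w(u_R)\bigr)^TU^{sc}(u_L,u_R)=\bigl[w(u_L)^Tu_L-\mathcal S(u_L)\bigr]-\bigl[w(u_R)^Tu_R-\mathcal S(u_R)\bigr].$$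
   Context: Set $c_p=\gamma R/(\gamma-1)$ and specific enthalpy $h=c_pT$. The thermodynamic entropy is $s=\frac{R}{\gamma-1}\log(T/T_\infty)-R\log(\rho/\rho_\infty)$ with fixed reference constants $T_\infty,\rho_\infty>0$. The mathematical entropy is $\mathcal S(u)=-\rho s$. The entropy variables are $$w(u)=\Bigl(\frac{\partial\mathcal S}{\partial u}\Bigr)^T=\Bigl(\frac hT-s-\frac{|V|^2}{2T},\;\frac{V_1}{T},\;\frac{V_2}{T},\;\frac{V_3}{T},\;-\frac1T\Bigr)^T.$$ Notation: $\overline{Z_k}^2$ denotes the square of the arithmetic mean, while $\overline{Z_k^2}$ denotes the arithmetic mean of the squares. *)

From Stdlib Require Import Reals.
Open Scope R_scope.

Record state := mkState { rho : R; temp : R; V1 : R; V2 : R; V3 : R }.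

Definition admissible (s : state) : Prop := 0 < rho s /\ 0 < temp s.

Record vec5 := mk5 { c1 : R; c2 : R; c3 : R; c4 : R; c5 : R }.

Definition dot5 (a b : vec5) : R :=
  c1 a * c1 b + c2 a * c2 b + c3 a * c3 b + c4 a * c4 b + c5 a * c5 b.

Definition sub5 (a b : vec5) : vec5 :=
  mk5 (c1 a - c1 b) (c2 a - c2 b) (c3 a - c3 b) (c4 a - c4 b) (c5 a - c5 b).

Definition Vsq (s : state) : R := V1 s ^ 2 + V2 s ^ 2 + V3 s ^ 2.

Section Gas.
Variables (Rg gamma Tinf rhoinf : R).

Definition energy (s : state) : R := Rg / (gamma - 1) * temp s + / 2 * Vsq s.

Definition cons (s : state) : vec5 :=
  mk5 (rho s) (rho s * V1 s) (rho s * V2 s) (rho s * V3 s) (rho s * energy s).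

Definition cp : R := gamma * Rg / (gamma - 1).
Definition enthalpy (s : state) : R := cp * temp s.

Definition entropy_s (s : state) : R :=
  Rg / (gamma - 1) * ln (temp s / Tinf) - Rg * ln (rho s / rhoinf).

Definition math_entropy (s : state) : R := - rho s * entropy_s s.

Definition entvar (s : state) : vec5 :=
  mk5 (enthalpy s / temp s - entropy_s s - Vsq s / (2 * temp s))
      (V1 s / temp s) (V2 s / temp s) (V3 s / temp s) (- / temp s).


End Gas.

Definition amean (a b : R) : R := / 2 * (a + b).
Definition amean_sq (a b : R) : R := / 2 * (a ^ 2 + b ^ 2).
Definition logmean (a b : R) : R :=
  if Req_EM_T a b then a else (b - a) / (ln b - ln a).

Definition U1sc (Rg gamma : R) (sL sR : state) : vec5 :=
  let z1 s := / sqrt (temp s) in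
  let z2 s := V1 s / sqrt (temp s) in
  let z3 s := V2 s / sqrt (temp s) in
  let z4 s := V3 s / sqrt (temp s) in
  let z5 s := rho s * sqrt (temp s) in
  let Z1 := amean (z1 sL) (z1 sR) in
  let Z2 := amean (z2 sL) (z2 sR) in
  let Z3 := amean (z3 sL) (z3 sR) in
  let Z4 := amean (z4 sL) (z4 sR) in
  let Z5 := amean (z5 sL) (z5 sR) in
  let Z1l := logmean (z1 sL) (z1 sR) in
  let Z5l := logmean (z5 sL) (z5 sR) in
  mk5 (Z5l * Z1) (Z5l * Z2) (Z5l * Z3) (Z5l * Z4)
      (/ 2 * Z5l * (Rg * (gamma + 1) / ((gamma - 1) * Z1l)
                    + / Z1 * (Z2 ^ 2 + Z3 ^ 2 + Z4 ^ 2 - Rg * Z5 / Z5l))).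

Definition U2sc (Rg gamma : R) (sL sR : state) : vec5 :=
  let Z2 := amean (V1 sL) (V1 sR) in
  let Z3 := amean (V2 sL) (V2 sR) in
  let Z4 := amean (V3 sL) (V3 sR) in
  let Z1l := logmean (rho sL) (rho sR) in
  let Z5l := logmean (/ temp sL) (/ temp sR) in
  mk5 Z1l (Z1l * Z2) (Z1l * Z3) (Z1l * Z4)
      (Z1l * (Rg / ((gamma - 1) * Z5l) + Z2 ^ 2 + Z3 ^ 2 + Z4 ^ 2
              - / 2 * (amean_sq (V1 sL) (V1 sR) + amean_sq (V2 sL) (V2 sR)
                       + amean_sq (V3 sL) (V3 sR)))).

Definition sc_properties (Rg gamma Tinf rhoinf : R)
    (U : state -> state -> vec5) : Prop :=
  (forall sL sR, admissible sL -> admissible sR -> U sL sR = U sR sL) /\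
  (forall s, admissible s -> U s s = cons Rg gamma s) /\
  (forall sL sR, admissible sL -> admissible sR ->
     dot5 (sub5 (entvar Rg gamma Tinf rhoinf sL) (entvar Rg gamma Tinf rhoinf sR))
          (U sL sR)
     = (dot5 (entvar Rg gamma Tinf rhoinf sL) (cons Rg gamma sL)
          - math_entropy Rg gamma Tinf rhoinf sL)
       - (dot5 (entvar Rg gamma Tinf rhoinf sR) (cons Rg gamma sR)
          - math_entropy Rg gamma Tinf rhoinf sR)).

(* Every admissible state satisfies w(u)^T u - S(u) = R rho, so the shuffle
   condition reads (w_L - w_R)^T U = R (rho_L - rho_R).  The entropy variables
   involve ln rho and ln T (for U1 rewritten through Z1 = 1/sqrt T and
   Z5 = rho sqrt T, for U2 through Z1 = rho and Z5 = 1/T); the identity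
   ln a - ln b = (a - b) / logmean a b eliminates these logarithms, after which
   the shuffle condition is a rational identity in the means. *)

From Pilot Require Import Defs.
From Stdlib Require Import Reals Lra.
Open Scope R_scope.

Lemma ln_div x y : 0 < x -> 0 < y -> ln (x / y) = ln x - ln y.
Proof.
  intros Hx Hy; unfold Rdiv.
  rewrite ln_mult, ln_Rinv by (auto; apply Rinv_0_lt_compat; lra); ring.
Qed.

Lemma pos_eq_square t : 0 < t -> exists q, 0 < q /\ t = q * q.
Proof.
  intros Ht; exists (sqrt t); split.
  - now apply sqrt_lt_R0.
  - symmetry; apply sqrt_sqrt; lra.
Qed.

Lemma amean_sym a b : amean a b = amean b a.
Proof. unfold amean; ring. Qed.

Lemma amean_diag a : amean a a = a.
Proof. unfold amean; field. Qed.

Lemma amean_sq_sym a b : amean_sq a b = amean_sq b a.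
Proof. unfold amean_sq; ring. Qed.

Lemma amean_sq_diag a : amean_sq a a = a ^ 2.
Proof. unfold amean_sq; field. Qed.

Lemma logmean_diag a : logmean a a = a.
Proof. unfold logmean; destruct (Req_EM_T a a); [reflexivity | contradiction]. Qed.

Lemma ln_sub_neq0 a b : 0 < a -> 0 < b -> a <> b -> ln b - ln a <> 0.
Proof. intros Ha Hb Hab E; apply Hab, ln_inv; auto; lra. Qed.

Lemma logmean_sym a b : 0 < a -> 0 < b -> logmean a b = logmean b a.
Proof.
  intros Ha Hb; unfold logmean.
  destruct (Req_EM_T a b) as [Hab | Hab], (Req_EM_T b a) as [Hba | Hba];
    try (exfalso; auto; fail).
  - assumption.
  - pose proof (ln_sub_neq0 a b Ha Hb Hab).
    field; split; lra.
Qed.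

Lemma logmean_gt0 a b : 0 < a -> 0 < b -> 0 < logmean a b.
Proof.
  intros Ha Hb; unfold logmean.
  destruct (Req_EM_T a b) as [_ | Hab]; [assumption |].
  destruct (Rlt_or_le a b) as [Hlt | Hle].
  - assert (ln a < ln b) by now apply ln_increasing.
    apply Rdiv_lt_0_compat; lra.
  - assert (ln b < ln a) by (apply ln_increasing; lra).
    replace ((b - a) / (ln b - ln a)) with ((a - b) / (ln a - ln b))
      by (field; lra).
    apply Rdiv_lt_0_compat; lra.
Qed.

Lemma ln_via_logmean a b : 0 < a -> 0 < b ->
  ln a = ln b + (a - b) / logmean a b.
Proof.
  intros Ha Hb; unfold logmean.
  destruct (Req_EM_T a b) as [<- | Hab]; [field; lra |].
  pose proof (ln_sub_neq0 a b Ha Hb Hab).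
  field; split; [| intro E; apply Hab]; lra.
Qed.

Lemma ln_via_logmean_inv a b : 0 < a -> 0 < b ->
  ln a = ln b - (/ a - / b) / logmean (/ a) (/ b).
Proof.
  intros Ha Hb.
  assert (E := ln_via_logmean (/ a) (/ b)
                 (Rinv_0_lt_compat a Ha) (Rinv_0_lt_compat b Hb)).
  rewrite !ln_Rinv in E by assumption; lra.
Qed.

Section ShuffleCondition.

Variables (Rg gamma Tinf rhoinf : R).
Hypotheses (Hgamma : 1 < gamma) (HTinf : 0 < Tinf) (Hrhoinf : 0 < rhoinf).

Let w := entvar Rg gamma Tinf rhoinf.

Lemma dot_entvar_cons_sub_math_entropy s : admissible s ->
  dot5 (w s) (cons Rg gamma s) - math_entropy Rg gamma Tinf rhoinf s = Rg * rho s.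
Proof.
  intros [_ Ht]; unfold w, dot5, entvar, cons, math_entropy, enthalpy, cp, energy, Vsq.
  cbn [Defs.c1 c2 c3 c4 c5]; field; lra.
Qed.

Lemma sc_properties_intro (U : state -> state -> vec5) :
  (forall sL sR, admissible sL -> admissible sR -> U sL sR = U sR sL) ->
  (forall s, admissible s -> U s s = cons Rg gamma s) ->
  (forall sL sR, admissible sL -> admissible sR ->
     dot5 (sub5 (w sL) (w sR)) (U sL sR) = Rg * rho sL - Rg * rho sR) ->
  sc_properties Rg gamma Tinf rhoinf U.
Proof.
  intros Hsym Hcons Hshuffle; split; [| split]; auto.
  intros sL sR HL HR.
  rewrite !dot_entvar_cons_sub_math_entropy by assumption.
  now apply Hshuffle.
Qed.

Lemma U1sc_sym sL sR : admissible sL -> admissible sR ->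
  U1sc Rg gamma sL sR = U1sc Rg gamma sR sL.
Proof.
  intros [HrL HtL] [HrR HtR]; unfold U1sc.
  assert (HqL := sqrt_lt_R0 _ HtL); assert (HqR := sqrt_lt_R0 _ HtR).
  rewrite (amean_sym (/ sqrt (temp sL))), (amean_sym (V1 sL / _)),
    (amean_sym (V2 sL / _)), (amean_sym (V3 sL / _)), (amean_sym (rho sL * _)),
    (logmean_sym (/ sqrt (temp sL))), (logmean_sym (rho sL * _))
    by (apply Rinv_0_lt_compat || apply Rmult_lt_0_compat; assumption).
  reflexivity.
Qed.

Lemma U1sc_diag s : admissible s -> U1sc Rg gamma s s = cons Rg gamma s.
Proof.
  destruct s as [r t a b c]; intros [Hr Ht]; cbn [rho temp] in *.
  destruct (pos_eq_square t Ht) as [q [Hq ->]].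
  unfold U1sc, cons, energy, Vsq; cbn [rho temp V1 V2 V3].
  rewrite sqrt_square, !amean_diag, !logmean_diag by lra.
  f_equal; field; lra.
Qed.

Lemma U1sc_shuffle sL sR : admissible sL -> admissible sR ->
  dot5 (sub5 (w sL) (w sR)) (U1sc Rg gamma sL sR) = Rg * rho sL - Rg * rho sR.
Proof.
  destruct sL as [rL tL aL bL cL], sR as [rR tR aR bR cR].
  intros [HrL HtL] [HrR HtR]; cbn [rho temp] in *.
  destruct (pos_eq_square tL HtL) as [qL [HqL ->]].
  destruct (pos_eq_square tR HtR) as [qR [HqR ->]].
  assert (HzL : 0 < rL * qL) by (apply Rmult_lt_0_compat; assumption).
  assert (HzR : 0 < rR * qR) by (apply Rmult_lt_0_compat; assumption).
  assert (Hm1 := logmean_gt0 (/ qL) (/ qR)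
                   (Rinv_0_lt_compat qL HqL) (Rinv_0_lt_compat qR HqR)).
  assert (Hm5 := logmean_gt0 _ _ HzL HzR).
  assert (ElnrL : ln rL = ln rR + ln qR - ln qL + (rL * qL - rR * qR)
                                              / logmean (rL * qL) (rR * qR)).
  { assert (E := ln_via_logmean _ _ HzL HzR).
    rewrite !ln_mult in E by assumption; lra. }
  unfold w, dot5, sub5, entvar, U1sc, enthalpy, cp, entropy_s, Vsq, amean.
  cbn [Defs.c1 c2 c3 c4 c5 rho temp V1 V2 V3].
  rewrite !sqrt_square, !ln_div, !ln_mult by lra.
  rewrite ElnrL, (ln_via_logmean_inv qL qR) by assumption.
  field; repeat split; lra.
Qed.

Lemma U2sc_sym sL sR : admissible sL -> admissible sR ->
  U2sc Rg gamma sL sR = U2sc Rg gamma sR sL.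
Proof.
  intros [HrL HtL] [HrR HtR]; unfold U2sc.
  rewrite (amean_sym (V1 sL)), (amean_sym (V2 sL)), (amean_sym (V3 sL)),
    (amean_sq_sym (V1 sL)), (amean_sq_sym (V2 sL)), (amean_sq_sym (V3 sL)),
    (logmean_sym (rho sL)), (logmean_sym (/ temp sL))
    by (try apply Rinv_0_lt_compat; assumption).
  reflexivity.
Qed.

Lemma U2sc_diag s : admissible s -> U2sc Rg gamma s s = cons Rg gamma s.
Proof.
  intros [_ Ht]; unfold U2sc, cons, energy, Vsq.
  rewrite !amean_diag, !amean_sq_diag, !logmean_diag.
  f_equal; field; lra.
Qed.

Lemma U2sc_shuffle sL sR : admissible sL -> admissible sR ->
  dot5 (sub5 (w sL) (w sR)) (U2sc Rg gamma sL sR) = Rg * rho sL - Rg * rho sR.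
Proof.
  destruct sL as [rL tL aL bL cL], sR as [rR tR aR bR cR].
  intros [HrL HtL] [HrR HtR]; cbn [rho temp] in *.
  assert (Hm1 := logmean_gt0 rL rR HrL HrR).
  assert (Hm5 := logmean_gt0 (/ tL) (/ tR)
                   (Rinv_0_lt_compat tL HtL) (Rinv_0_lt_compat tR HtR)).
  unfold w, dot5, sub5, entvar, U2sc, enthalpy, cp, entropy_s, Vsq, amean, amean_sq.
  cbn [Defs.c1 c2 c3 c4 c5 rho temp V1 V2 V3].
  rewrite !ln_div by assumption.
  rewrite (ln_via_logmean rL rR), (ln_via_logmean_inv tL tR) by assumption.
  field; repeat split; lra.
Qed.

End ShuffleCondition.

Theorem lemma5p1 (Rg gamma Tinf rhoinf : R) :
  0 < Rg -> 1 < gamma -> 0 < Tinf -> 0 < rhoinf ->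
  sc_properties Rg gamma Tinf rhoinf (U1sc Rg gamma) /\
  sc_properties Rg gamma Tinf rhoinf (U2sc Rg gamma).
Proof.
  intros _ Hgamma HTinf Hrhoinf; split; apply sc_properties_intro;
    auto using U1sc_sym, U1sc_diag, U1sc_shuffle, U2sc_sym, U2sc_diag, U2sc_shuffle.
Qed.
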